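(* Let $(\theta^-,\theta^+)$ be the maximal open interval containing $0$ on which the function $\gamma$ exists. Then $\tilde\theta(\theta)=\theta$ is the only continuously differentiable function $\tilde\theta:(\theta^-,\theta^+)\to(\theta^-,\theta^+)$ with $\tilde\theta(0)=0$ and $f_{\mathbf{u}_0}(\tilde\theta(\theta),\theta)=0$ for all $\theta\in(\theta^-,\theta^+)$, where $f_{\mathbf{u}_0}(\tilde\theta,\theta):=\mathbf{t}_2^d(\gamma(\tilde\theta))\cdot\mathbf{t}_4^r-\mathbf{t}_2^d(\gamma(\theta))\cdot\mathbf{t}_4^r$. The same holds with $f_{\mathbf{u}_0}$ replaced by $f_{\mathbf{v}_0}(\tilde\theta,\theta):=\mathbf{t}_3^d(\tilde\theta)\cdot\mathbf{t}_1^r-\mathbf{t}_3^d(\theta)\cdot\mathbf{t}_1^r$.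
   Context: Fix $\mathbf{t}_1^r,\dots,\mathbf{t}_4^r\in\mathbb{R}^3$ with $\mathbf{t}_i^r\cdot(\mathbf{t}_j^r\times\mathbf{t}_k^r)\neq0$ for $ijk\in\{123,234,341,412\}$. For nonzero $\mathbf{t}$ let $\mathbf{R}_{\mathbf{t}}(\varphi):=|\mathbf{t}|^{-2}\mathbf{t}\otimes\mathbf{t}+\cos\varphi(\mathbf{I}-|\mathbf{t}|^{-2}\mathbf{t}\otimes\mathbf{t})+|\mathbf{t}|^{-1}\sin\varphi(\mathbf{t}\times)$. Set $\mathbf{t}_2^d(\gamma):=\mathbf{R}_{\mathbf{t}_1^r}(\gamma)\mathbf{t}_2^r$, $\mathbf{t}_3^d(\theta):=\mathbf{R}_{\mathbf{t}_4^r}(\theta)\mathbf{t}_3^r$. The function $\gamma$ is the unique $C^1$ function with $\gamma(0)=0$, $\mathbf{t}_2^d(\gamma(\theta))\cdot\mathbf{t}_3^d(\theta)=\mathbf{t}_2^r\cdot\mathbf{t}_3^r$, and such that the four quantities $[\mathbf{t}_1^r\cdot(\mathbf{t}_2^d(\gamma(\theta))\times\mathbf{t}_3^d(\theta))][\mathbf{t}_1^r\cdot(\mathbf{t}_2^r\times\mathbf{t}_3^r)]$, $[\mathbf{t}_2^d(\gamma(\theta))\cdot(\mathbf{t}_3^d(\theta)\times\mathbf{t}_4^r)][\mathbf{t}_2^r\cdot(\mathbf{t}_3^r\times\mathbf{t}_4^r)]$, $[\mathbf{t}_3^d(\theta)\cdot(\mathbf{t}_4^r\times\mathbf{t}_1^r)][\mathbf{t}_3^r\cdot(\mathbf{t}_4^r\times\mathbf{t}_1^r)]$,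 $[\mathbf{t}_4^r\cdot(\mathbf{t}_1^r\times\mathbf{t}_2^d(\gamma(\theta)))][\mathbf{t}_4^r\cdot(\mathbf{t}_1^r\times\mathbf{t}_2^r)]$ are positive; it is analytic with $\gamma'(\theta)=\frac{|\mathbf{t}_1^r|}{|\mathbf{t}_4^r|}\frac{\mathbf{t}_2^d(\gamma(\theta))\cdot(\mathbf{t}_3^d(\theta)\times\mathbf{t}_4^r)}{\mathbf{t}_1^r\cdot(\mathbf{t}_2^d(\gamma(\theta))\times\mathbf{t}_3^d(\theta))}$. *)

From Stdlib Require Import Reals.
From Coquelicot Require Import Coquelicot.
Open Scope R_scope.

Definition vec3 : Type := (R * R * R)%type.

Definition vx (v : vec3) : R := fst (fst v).
Definition vy (v : vec3) : R := snd (fst v).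
Definition vz (v : vec3) : R := snd v.
Definition mkv (a b c : R) : vec3 := (a, b, c).

Definition dot (u v : vec3) : R := vx u * vx v + vy u * vy v + vz u * vz v.
Definition cross (u v : vec3) : vec3 :=
  mkv (vy u * vz v - vz u * vy v)
      (vz u * vx v - vx u * vz v)
      (vx u * vy v - vy u * vx v).
Definition vadd (u v : vec3) : vec3 := mkv (vx u + vx v) (vy u + vy v) (vz u + vz v).
Definition vsub (u v : vec3) : vec3 := mkv (vx u - vx v) (vy u - vy v) (vz u - vz v).
Definition vscal (a : R) (v : vec3) : vec3 := mkv (a * vx v) (a * vy v) (a * vz v).
Definition vnorm (v : vec3) : R := sqrt (dot v v).

Definition triple (a b c : vec3) : R := dot a (cross b c).

Definition rot (t : vec3) (phi : R) (v : vec3) : vec3 :=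
  let p := vscal (/ (vnorm t ^ 2) * dot t v) t in
  vadd (vadd p (vscal (cos phi) (vsub v p)))
       (vscal (/ vnorm t * sin phi) (cross t v)).

Definition t2d (t1 t2 : vec3) (g : R) : vec3 := rot t1 g t2.
Definition t3d (t4 t3 : vec3) (th : R) : vec3 := rot t4 th t3.

Definition nondeg (t1 t2 t3 t4 : vec3) : Prop :=
  triple t1 t2 t3 <> 0 /\ triple t2 t3 t4 <> 0 /\
  triple t3 t4 t1 <> 0 /\ triple t4 t1 t2 <> 0.

Definition in_int (a b : Rbar) (x : R) : Prop := Rbar_lt a x /\ Rbar_lt x b.

Definition C1_on (a b : Rbar) (f : R -> R) : Prop :=
  (forall x, in_int a b x -> ex_derive f x) /\
  (forall x, in_int a b x -> continuous (Derive f) x).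

(* g is "the function gamma" on the open interval (a,b) containing 0:
   C^1, g 0 = 0, the dot-product constraint, and the four sign conditions. *)
Definition gamma_sol (t1 t2 t3 t4 : vec3) (a b : Rbar) (g : R -> R) : Prop :=
  in_int a b 0 /\
  C1_on a b g /\
  g 0 = 0 /\
  forall th, in_int a b th ->
    dot (t2d t1 t2 (g th)) (t3d t4 t3 th) = dot t2 t3 /\
    triple t1 (t2d t1 t2 (g th)) (t3d t4 t3 th) * triple t1 t2 t3 > 0 /\
    triple (t2d t1 t2 (g th)) (t3d t4 t3 th) t4 * triple t2 t3 t4 > 0 /\
    triple (t3d t4 t3 th) t4 t1 * triple t3 t4 t1 > 0 /\
    triple t4 t1 (t2d t1 t2 (g th)) * triple t4 t1 t2 > 0.

Definition gamma_maximal (t1 t2 t3 t4 : vec3) (a b : Rbar) (g : R -> R) : Prop :=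
  gamma_sol t1 t2 t3 t4 a b g /\
  forall a' b' g', gamma_sol t1 t2 t3 t4 a' b' g' -> Rbar_le a a' /\ Rbar_le b' b.

Definition f_u0 (t1 t2 t4 : vec3) (g : R -> R) (tt th : R) : R :=
  dot (t2d t1 t2 (g tt)) t4 - dot (t2d t1 t2 (g th)) t4.
Definition f_v0 (t1 t3 t4 : vec3) (tt th : R) : R :=
  dot (t3d t4 t3 tt) t1 - dot (t3d t4 t3 th) t1.

Definition admissible (a b : Rbar) (F : R -> R -> R) (tt : R -> R) : Prop :=
  C1_on a b tt /\
  (forall th, in_int a b th -> in_int a b (tt th)) /\
  tt 0 = 0 /\
  (forall th, in_int a b th -> F (tt th) th = 0).

Definition unique_id_solution (a b : Rbar) (F : R -> R -> R) : Prop :=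
  admissible a b F (fun th => th) /\
  forall tt, admissible a b F tt -> forall th, in_int a b th -> tt th = th.

From Pilot Require Import Defs.
From Stdlib Require Import Reals Lra.
From Coquelicot Require Import Coquelicot.
Open Scope R_scope.

(* Both [f_u0] and [f_v0] have the form [h tt - h th], with
   [h th = t2d (gamma th) . t4] resp. [h th = t3d th . t1].  Rotation about [t]
   has angular derivative [/|t| t x _], so [h'] is a nonzero multiple of a
   triple product that one of the sign conditions keeps away from zero; for
   [f_u0] the factor [gamma'] is nonzero because differentiating the constraint
   [t2d (gamma th) . t3d th = const] would otherwise force
   [triple (t2d (gamma th)) (t3d th) t4 = 0].  A function with nowhere-vanishing
   derivative on an interval is injective, so [h (tt th) = h th] gives
   [tt th = th]. *)

Ltac vec_ring :=
  repeat match goal with v : vec3 |- _ => destruct v as [[? ?] ?] end;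
  unfold triple, dot, cross, vscal, mkv, vx, vy, vz; simpl; ring.

Lemma triple_swap23 a b c : triple a b c = - triple a c b.
Proof. vec_ring. Qed.

Lemma triple_rotate a b c : triple a b c = triple b c a.
Proof. vec_ring. Qed.

Lemma vnorm_neq0_of_triple t u w : triple t u w <> 0 -> vnorm t <> 0.
Proof.
intros Ht Hn; apply Ht; destruct t as [[a b] c].
unfold vnorm, dot, vx, vy, vz in Hn; simpl in Hn.
apply sqrt_eq_0 in Hn; [|nra].
replace a with 0 by nra; replace b with 0 by nra; replace c with 0 by nra.
vec_ring.
Qed.

Definition is_vderive (a : R -> vec3) (x : R) (da : vec3) : Prop :=
  is_derive (fun y => vx (a y)) x (vx da) /\
  is_derive (fun y => vy (a y)) x (vy da) /\
  is_derive (fun y => vz (a y)) x (vz da).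

Lemma is_vderive_rot t v p : vnorm t <> 0 ->
  is_vderive (fun p => rot t p v) p (vscal (/ vnorm t) (cross t (rot t p v))).
Proof.
intros Hn.
assert (Hsq : vnorm t * vnorm t = dot t t).
{ apply sqrt_sqrt; destruct t as [[a b] c]; unfold dot, vx, vy, vz; simpl; nra. }
(* Only [|t|^2 = t . t] is used, so [|t|] is abstracted to a constant. *)
unfold is_vderive, rot; simpl pow; revert Hn Hsq; generalize (vnorm t); intros n Hn Hsq.
destruct t as [[a b] c], v as [[d e] f].
unfold vscal, vadd, vsub, cross, mkv, dot, vx, vy, vz in *; simpl in *.
split; [|split]; auto_derive; try tauto;
  field_simplify_eq; auto; replace (n ^ 3) with (n * (n * n)) by ring; rewrite Hsq; ring.
Qed.

Lemma is_vderive_comp a g x da dg :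
  is_vderive a (g x) da -> is_derive g x dg ->
  is_vderive (fun y => a (g y)) x (vscal dg da).
Proof.
intros [Hx [Hy Hz]] Hg.
split; [|split].
- exact (is_derive_comp (fun p => vx (a p)) g x _ dg Hx Hg).
- exact (is_derive_comp (fun p => vy (a p)) g x _ dg Hy Hg).
- exact (is_derive_comp (fun p => vz (a p)) g x _ dg Hz Hg).
Qed.

Lemma is_vderive_const w x : is_vderive (fun _ => w) x (mkv 0 0 0).
Proof. split; [|split]; exact (is_derive_const _ x). Qed.

Lemma is_derive_Rplus (f g : R -> R) x df dg :
  is_derive f x df -> is_derive g x dg -> is_derive (fun y => f y + g y) x (df + dg).
Proof. intros; apply (is_derive_plus f g x df dg); auto. Qed.

Lemma is_derive_Rmult (f g : R -> R) x df dg :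
  is_derive f x df -> is_derive g x dg ->
  is_derive (fun y => f y * g y) x (df * g x + f x * dg).
Proof. intros; apply (is_derive_mult f g x df dg); auto; intros; apply Rmult_comm. Qed.

Lemma is_derive_dot a b x da db :
  is_vderive a x da -> is_vderive b x db ->
  is_derive (fun y => dot (a y) (b y)) x (dot da (b x) + dot (a x) db).
Proof.
intros [A1 [A2 A3]] [B1 [B2 B3]].
replace (dot da (b x) + dot (a x) db) with
  ((vx da * vx (b x) + vx (a x) * vx db) + (vy da * vy (b x) + vy (a x) * vy db)
   + (vz da * vz (b x) + vz (a x) * vz db)) by (unfold dot; ring).
unfold dot; apply is_derive_Rplus; [apply is_derive_Rplus|]; apply is_derive_Rmult; auto.
Qed.

Lemma is_derive_dot_rot t v w g x dg : vnorm t <> 0 -> is_derive g x dg ->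
  is_derive (fun y => dot (rot t (g y) v) w) x (dg / vnorm t * triple w t (rot t (g x) v)).
Proof.
intros Ht Hg.
pose proof (is_derive_dot _ _ x _ _
  (is_vderive_comp _ g x _ dg (is_vderive_rot t v (g x) Ht) Hg) (is_vderive_const w x)) as H.
replace (dg / vnorm t * triple w t (rot t (g x) v)) with
  (dot (vscal dg (vscal (/ vnorm t) (cross t (rot t (g x) v)))) w + dot (rot t (g x) v) (mkv 0 0 0));
  [exact H|].
generalize (rot t (g x) v); intros; unfold Rdiv; vec_ring.
Qed.

Lemma is_derive_dot_rot_rot t s v w g x dg : vnorm t <> 0 -> vnorm s <> 0 -> is_derive g x dg ->
  is_derive (fun y => dot (rot t (g y) v) (rot s y w)) x
    (dg / vnorm t * triple (rot s x w) t (rot t (g x) v)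
     + / vnorm s * triple (rot t (g x) v) s (rot s x w)).
Proof.
intros Ht Hs Hg.
pose proof (is_derive_dot _ _ x _ _
  (is_vderive_comp _ g x _ dg (is_vderive_rot t v (g x) Ht) Hg) (is_vderive_rot s w x Hs)) as H.
match type of H with is_derive _ _ ?l =>
  match goal with |- is_derive _ _ ?l' => replace l' with l; [exact H|] end end.
generalize (rot t (g x) v) (rot s x w); intros; unfold Rdiv; vec_ring.
Qed.

Lemma in_int_locally a b x : Defs.in_int a b x -> locally x (Defs.in_int a b).
Proof.
intros Hx; apply (locally_open (Defs.in_int a b)); auto.
apply open_and; [apply open_Rbar_gt | apply open_Rbar_lt].
Qed.

Lemma in_int_between a b x y z : Defs.in_int a b x -> Defs.in_int a b y -> x <= z <= y -> Defs.in_int a b z.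
Proof.
intros [Hax _] [_ Hyb] [Hxz Hzy]; split.
- exact (Rbar_lt_le_trans a x z Hax Hxz).
- exact (Rbar_le_lt_trans z y b Hzy Hyb).
Qed.

Lemma Derive_gamma_neq0 t1 t2 t3 t4 a b g x :
  vnorm t1 <> 0 -> vnorm t4 <> 0 -> gamma_sol t1 t2 t3 t4 a b g -> Defs.in_int a b x ->
  Derive g x <> 0.
Proof.
intros H1 H4 [_ [[Hg _] [_ Hcon]]] Hx Hg0.
destruct (Hcon x Hx) as [_ [_ [Hsign _]]].
assert (Hconst : is_derive (fun y => dot (rot t1 (g y) t2) (rot t4 y t3)) x 0).
{ apply (is_derive_ext_loc (fun _ => dot t2 t3)); [|exact (is_derive_const (dot t2 t3) x)].
  apply (filter_imp (Defs.in_int a b)); [|now apply in_int_locally].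
  intros y Hy; symmetry; apply (Hcon y Hy). }
pose proof (is_derive_dot_rot_rot t1 t4 t2 t3 g x _ H1 H4 (Derive_correct _ _ (Hg x Hx))) as Hderiv.
apply is_derive_unique in Hconst, Hderiv; rewrite Hconst, Hg0 in Hderiv.
unfold t2d, t3d in Hsign; rewrite triple_swap23 in Hsign.
assert (Hzero : / vnorm t4 * triple (rot t1 (g x) t2) t4 (rot t4 x t3) = 0)
  by (unfold Rdiv in Hderiv; lra).
apply Rmult_integral in Hzero as [Hinv | Htriple].
- exact (Rinv_neq_0_compat _ H4 Hinv).
- rewrite Htriple in Hsign; lra.
Qed.

Lemma injective_of_is_derive_neq0 a b (h : R -> R) :
  (forall x, Defs.in_int a b x -> exists l, is_derive h x l /\ l <> 0) ->
  forall x y, Defs.in_int a b x -> Defs.in_int a b y -> h x = h y -> x = y.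
Proof.
intros Hd x y Hx Hy Hxy.
destruct (Req_dec x y) as [|Hne]; [assumption|exfalso].
assert (Hin : forall z, Rmin x y <= z <= Rmax x y -> Defs.in_int a b z).
{ intros z Hz; apply (in_int_between a b (Rmin x y) (Rmax x y));
    [unfold Rmin | unfold Rmax | ]; try destruct Rle_dec; auto. }
destruct (MVT_gen h x y (Derive h)) as [c [Hc Hmvt]].
- intros z Hz; destruct (Hd z (Hin z ltac:(lra))) as [l [Hl _]].
  now rewrite (is_derive_unique _ _ _ Hl).
- intros z Hz; destruct (Hd z (Hin z Hz)) as [l [Hl _]].
  apply continuity_pt_filterlim.
  exact (@ex_derive_continuous R_AbsRing R_NormedModule h z (ex_intro _ l Hl)).
- destruct (Hd c (Hin c Hc)) as [l [Hl Hl0]].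
  rewrite (is_derive_unique _ _ _ Hl), Hxy, Rminus_diag in Hmvt.
  symmetry in Hmvt; apply Rmult_integral in Hmvt as [|]; [contradiction | lra].
Qed.

Lemma unique_id_solution_of_is_derive_neq0 a b (h : R -> R) :
  (forall x, Defs.in_int a b x -> exists l, is_derive h x l /\ l <> 0) ->
  unique_id_solution a b (fun tt th => h tt - h th).
Proof.
intros Hd; split.
- split; [split|split; [auto|split; [reflexivity|intros; ring]]].
  + intros; apply ex_derive_id.
  + intros x _; apply continuous_ext with (fun _ => 1); [|apply continuous_const].
    intros y; symmetry; apply is_derive_unique, (is_derive_id y).
- intros tt [_ [Hmap [_ Hzero]]] th Hth.
  apply (injective_of_is_derive_neq0 a b h Hd); auto.
  specialize (Hzero th Hth); lra.
Qed.

Theorem lemmaA2 (t1 t2 t3 t4 : vec3) (thm thp : Rbar) (gamma : R -> R) :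
  nondeg t1 t2 t3 t4 ->
  gamma_maximal t1 t2 t3 t4 thm thp gamma ->
  unique_id_solution thm thp (f_u0 t1 t2 t4 gamma) /\
  unique_id_solution thm thp (f_v0 t1 t3 t4).
Proof.
intros [Hnd1 [Hnd2 _]] [Hsol _].
pose proof Hsol as (_ & [Hgd _] & _ & Hcon).
assert (H1 : vnorm t1 <> 0) by exact (vnorm_neq0_of_triple _ _ _ Hnd1).
assert (H4 : vnorm t4 <> 0)
  by (rewrite <- triple_rotate in Hnd2; exact (vnorm_neq0_of_triple _ _ _ Hnd2)).
pose proof (Rinv_neq_0_compat _ H1) as Hinv1; pose proof (Rinv_neq_0_compat _ H4) as Hinv4.
split.
- apply (unique_id_solution_of_is_derive_neq0 thm thp (fun th => dot (t2d t1 t2 (gamma th)) t4)).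
  intros x Hx; destruct (Hcon x Hx) as (_ & _ & _ & _ & Hsign).
  pose proof (Derive_gamma_neq0 _ _ _ _ _ _ _ x H1 H4 Hsol Hx) as Hgamma'.
  eexists; split.
  + exact (is_derive_dot_rot t1 t2 t4 gamma x _ H1 (Derive_correct _ _ (Hgd x Hx))).
  + assert (Htriple : triple t4 t1 (t2d t1 t2 (gamma x)) <> 0)
      by (intro E; rewrite E in Hsign; lra).
    unfold Rdiv; repeat apply Rmult_integral_contrapositive_currified; auto.
- apply (unique_id_solution_of_is_derive_neq0 thm thp (fun th => dot (t3d t4 t3 th) t1)).
  intros x Hx; destruct (Hcon x Hx) as (_ & _ & _ & Hsign & _).
  eexists; split.
  + exact (is_derive_dot_rot t4 t3 t1 (fun th => th) x 1 H4 (is_derive_id x)).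
  + rewrite triple_swap23, triple_rotate.
    assert (Htriple : triple (t3d t4 t3 x) t4 t1 <> 0) by (intro E; rewrite E in Hsign; lra).
    unfold Rdiv; rewrite Rmult_1_l; apply Rmult_integral_contrapositive_currified; auto.
    intro E; apply Htriple; unfold t3d; lra.
Qed.
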